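(* The hereditary class property $\Sigma=$ ''weakly sparse'' — the set of hereditary classes $\mathscr C$ for which there is an integer $t$ such that no graph in $\mathscr C$ contains $K_{t,t}$ as a subgraph — is a decomposition horizon, i.e. $\Sigma^\ast=\Sigma$.
   Context: Graphs are finite and simple; $K_{t,t}$ is the complete bipartite graph with both parts of size $t$. A hereditary class is a class closed under isomorphism and induced subgraphs; a hereditary class property is a set $\Pi$ of hereditary classes closed under passing to hereditary subclasses. For non-decreasing $f:\mathbb N\to\mathbb N$ and positive integer $p$, $\mathscr C$ has an $f$-bounded $\Pi$-decomposition with parameter $p$ if there is $\mathscr D_p\in\Pi$ such that every $G\in\mathscr C$ has a partition $V_1,\dots,V_N$ of $V(G)$ with $N\le f(|G|)$ and $G[V_{i_1}\cup\dots\cup V_{i_p}]\in\mathscr D_p$ for all $i_1,\dots,i_p\in[N]$. $\Pi^\ast$ is the set of hereditary classes that, for every positive integer $p$, have such a decomposition for some non-decreasing $f$ with $f(n)=n^{o(1)}$. $\Pi$ is a decomposition horizon if $\Pi^\ast=\Pi$. *)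

From Stdlib Require Import Reals.
From mathcomp Require Import all_boot.

Set Implicit Arguments.
Unset Strict Implicit.
Unset Printing Implicit Defensive.

Record graph := Graph {
  gV : finType;
  gadj : rel gV;
  gsym : symmetric gadj;
  girr : irreflexive gadj }.

Definition order (G : graph) : nat := #|gV G|.

Definition induced_emb (H G : graph) : Prop :=
  exists f : gV H -> gV G,
    injective f /\ forall x y, @gadj G (f x) (f y) = @gadj H x y.

Definition gclass := graph -> Prop.

Definition hereditary (C : gclass) : Prop :=
  forall G H, C G -> induced_emb H G -> C H.

Definition class_property (Pi : gclass -> Prop) : Prop :=
  (forall C, Pi C -> hereditary C) /\
  (forall C C', Pi C -> hereditary C' -> (forall G, C' G -> C G) -> Pi C').

Section Induced.
Variables (G : graph) (U : {set gV G}).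
Definition ind_V : finType := {x : gV G | x \in U}.
Definition ind_adj : rel ind_V := fun x y => @gadj G (val x) (val y).
Lemma ind_sym : symmetric ind_adj.
Proof. by move=> x y; rewrite /ind_adj (@gsym G). Qed.
Lemma ind_irr : irreflexive ind_adj.
Proof. by move=> x; rewrite /ind_adj (@girr G). Qed.
Definition induced : graph := Graph ind_sym ind_irr.
End Induced.

(* f(n) = n^{o(1)}: for every eps > 0, f(n) <= n^eps for all large n *)
Definition subpoly (f : nat -> nat) : Prop :=
  forall eps : R, Rlt 0 eps ->
    exists n0 : nat, forall n : nat, n0 <= n ->
      Rle (INR (f n)) (Rpower (INR n) eps).

(* C has an f-bounded Pi-decomposition with parameter p.
   A partition V_1..V_N of V(G) is given by a colouring c : V(G) -> 'I_N
   (V_i = c^-1(i)); a choice of indices i_1..i_p is a map 'I_p -> 'I_N. *)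
Definition has_decomposition (Pi : gclass -> Prop) (C : gclass)
    (f : nat -> nat) (p : nat) : Prop :=
  exists D : gclass, Pi D /\
    forall G : graph, C G ->
      exists (N : nat) (c : gV G -> 'I_N),
        N <= f (order G) /\
        forall idx : 'I_p -> 'I_N,
          D (induced [set v | c v \in [set idx k | k : 'I_p]]).

Definition star (Pi : gclass -> Prop) : gclass -> Prop :=
  fun C => hereditary C /\
    forall p : nat, 0 < p ->
      exists f : nat -> nat, {homo f : m n / m <= n} /\ subpoly f /\
        has_decomposition Pi C f p.

Definition contains_Ktt (t : nat) (G : graph) : Prop :=
  exists a b : 'I_t -> gV G,
    injective a /\ injective b /\
    (forall i j, a i != b j) /\
    (forall i j, @gadj G (a i) (b j)).

Definition weakly_sparse (C : gclass) : Prop :=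
  hereditary C /\ exists t : nat, forall G, C G -> ~ contains_Ktt t G.

Definition decomposition_horizon (Pi : gclass -> Prop) : Prop :=
  forall C, star Pi C <-> Pi C.

From Pilot Require Import Defs.
From Stdlib Require Import Reals Lra.
From mathcomp Require Import all_boot zify.

Set Implicit Arguments.
Unset Strict Implicit.
Unset Printing Implicit Defensive.

(* Let C have, for p = 2, a decomposition with n^{o(1)} parts into a class D
   without K_{t,t}.  If G in C contained K_{s,s}, the subgraph induced by its 2s
   vertices would split into N <= f(2s) <= sqrt(2s) parts; once s >= 2 t^2 we
   have t N <= s, so by pigeonhole each side of the biclique keeps t vertices of
   one colour, and the union of these two colour classes induces a graph of D
   containing K_{t,t}.  Conversely a weakly sparse class is its own
   decomposition with a single part. *)

Definition biclique (G : graph) (A B : {set gV G}) : Prop :=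
  [disjoint A & B] /\ {in A & B, forall x y, gadj x y}.

Lemma biclique_subset (G : graph) (A B A' B' : {set gV G}) :
  A' \subset A -> B' \subset B -> biclique A B -> biclique A' B'.
Proof.
move=> sA sB [dAB adjAB]; split; first exact: disjointW dAB.
by move=> x y /(subsetP sA) xA /(subsetP sB) yB; exact: adjAB.
Qed.

Lemma contains_Ktt_biclique t (G : graph) :
  contains_Ktt t G -> exists A B : {set gV G},
    [/\ biclique A B, #|A| = t & #|B| = t].
Proof.
case=> a [b [inj_a [inj_b [neq_ab adj_ab]]]].
exists [set x in codom a], [set y in codom b].
rewrite !cardsE !card_codom // card_ord; split=> //; split.
  rewrite -setI_eq0; apply/eqP/setP=> x; rewrite !inE.
  apply/andP=> -[/codomP[i ->] /codomP[j /eqP]].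
  by rewrite (negPf (neq_ab i j)).
by move=> _ _ /[!inE] /codomP[i ->] /codomP[j ->].
Qed.

Lemma biclique_contains_Ktt t (G : graph) (A B : {set gV G}) :
  biclique A B -> t <= #|A| -> t <= #|B| -> contains_Ktt t G.
Proof.
move=> [dAB adjAB] tA tB.
have inj_enum (S : {set gV G}) (tS : t <= #|S|) :
    injective (fun i => enum_val (widen_ord tS i)).
  by move=> i j /enum_val_inj /(congr1 val) /= /val_inj.
exists (fun i => enum_val (widen_ord tA i)), (fun j => enum_val (widen_ord tB j)).
split; first exact: inj_enum.
split; first exact: inj_enum.
split=> i j; last exact: adjAB (enum_valP _) (enum_valP _).
apply/eqP=> eq_ab; have := disjointFr dAB (enum_valP (widen_ord tA i)).
by rewrite eq_ab enum_valP.
Qed.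

Lemma order_induced (G : graph) (U : {set gV G}) : Defs.order (induced U) = #|U|.
Proof. by rewrite /Defs.order card_sig. Qed.

Lemma induced_emb_induced (G : graph) (U : {set gV G}) : induced_emb (induced U) G.
Proof. by exists val; split; first exact: val_inj. Qed.

Lemma card_preim_val (G : graph) (U A : {set gV G}) :
  A \subset U -> #|[set x : gV (induced U) | val x \in A]| = #|A|.
Proof.
move=> /subsetP sAU; rewrite -(card_imset _ val_inj); apply: eq_card => x.
apply/imsetP/idP=> [[y /[!inE] yA ->] //|xA].
by exists (exist _ x (sAU x xA)); rewrite ?inE.
Qed.

Lemma biclique_induced (G : graph) (U A B : {set gV G}) :
  biclique A B ->
  biclique [set x : gV (induced U) | val x \in A] [set y | val y \in B].
Proof.
move=> [dAB adjAB]; split; last by move=> x y /[!inE]; exact: adjAB.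
rewrite -setI_eq0; apply/eqP/setP=> x; rewrite !inE.
by apply/andP=> -[xA]; rewrite (disjointFr dAB xA).
Qed.

Lemma card_fibres (T : finType) (A : {set T}) N (c : T -> 'I_N) :
  #|A| = \sum_(k < N) #|[set x in A | c x == k]|.
Proof.
rewrite -sum1_card (partition_big c xpredT) //=.
by apply: eq_bigr => k _; rewrite -sum1_card; apply: eq_bigl => x; rewrite inE.
Qed.

Lemma exists_large_fibre (T : finType) (A : {set T}) N t (c : T -> 'I_N) :
  0 < #|A| -> t * N <= #|A| -> exists k, t <= #|[set x in A | c x == k]|.
Proof.
case/card_gt0P=> x0 _ tN_le; pose fibre k := #|[set x in A | c x == k]|.
have [k _ fibre_max] := @arg_maxnP _ (c x0) xpredT fibre isT.
exists k; rewrite -(@leq_pmul2r N); last exact: leq_ltn_trans (leq0n (c x0)) (ltn_ord (c x0)).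
apply: leq_trans tN_le _; rewrite (card_fibres A c) mulnC -[N in N * _]card_ord.
by rewrite -sum_nat_const; apply: leq_sum => j _; exact: fibre_max.
Qed.

Lemma biclique_two_colour_classes (H : graph) (A B : {set gV H}) N t
    (c : gV H -> 'I_N) :
  biclique A B -> 0 < #|A| -> 0 < #|B| -> t * N <= #|A| -> t * N <= #|B| ->
  exists idx : 'I_2 -> 'I_N,
    contains_Ktt t (induced [set v | c v \in [set idx k | k : 'I_2]]).
Proof.
move=> AB A_gt0 B_gt0 tN_A tN_B.
have [k1 t_A1] := exists_large_fibre c A_gt0 tN_A.
have [k2 t_B2] := exists_large_fibre c B_gt0 tN_B.
exists (fun k : 'I_2 => if k == ord0 then k1 else k2).
set U := [set v | _]; set A1 := [set x in A | _] in t_A1; set B2 := [set x in B | _] in t_B2.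
have fibre_sub (S : {set gV H}) (i : 'I_2) :
    [set x in S | c x == (if i == ord0 then k1 else k2)] \subset U.
  by apply/subsetP=> x /[!inE] /andP[_ /eqP ->]; apply/imsetP; exists i.
apply: (biclique_contains_Ktt (A := [set x : gV (induced U) | val x \in A1])
                              (B := [set y | val y \in B2])).
- by apply/biclique_induced/(biclique_subset _ _ AB); apply/subsetP=> x /[!inE] /andP[].
- by rewrite card_preim_val //; exact: (fibre_sub A ord0).
- by rewrite card_preim_val //; exact: (fibre_sub B ord_max).
Qed.

Lemma subpoly1 : subpoly (fun _ => 1).
Proof.
move=> eps eps_gt0; exists 1 => n n_ge1.
have one_le_n : Rle 1 (INR n) by apply: (le_INR 1); apply/leP.
rewrite [INR 1]/= -(Rpower_O (INR n)); last lra.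
by apply: Rle_Rpower; lra.
Qed.

Section SqrtBound.
Local Open Scope R_scope.

Lemma mul_sqrt_le (t k s : R) :
  0 <= t -> 0 <= s -> k * t * t <= s -> t * sqrt (k * s) <= s.
Proof.
move=> t_ge0 s_ge0 kt2_le.
rewrite -{1}(sqrt_square t) // -sqrt_mult_alt; last exact: Rmult_le_pos.
rewrite -{2}(sqrt_square s) //; apply: sqrt_le_1_alt.
have -> : t * t * (k * s) = k * t * t * s by ring.
exact: Rmult_le_compat_r.
Qed.

End SqrtBound.

Lemma subpoly_mul_le f k t :
  0 < k -> subpoly f -> exists2 s, 0 < s & t * f (k * s) <= s.
Proof.
move=> k_gt0 /(_ (Rinv 2) ltac:(lra)) [n0 f_le_sqrt].
pose s := n0 + k * t * t + 1; exists s; first lia.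
have /f_le_sqrt : n0 <= k * s by rewrite /s; nia.
rewrite Rpower_sqrt => [fks_le|]; last by apply: lt_0_INR; apply/ltP; rewrite /s; nia.
apply/leP/INR_le; rewrite mult_INR.
apply: Rle_trans (Rmult_le_compat_l _ _ _ (pos_INR t) fks_le) _.
rewrite mult_INR; apply: mul_sqrt_le; try exact: pos_INR.
by rewrite -!mult_INR; apply: le_INR; apply/leP; rewrite /s; lia.
Qed.

Lemma sub_star (Pi : gclass -> Prop) (C : gclass) :
  hereditary C -> Pi C -> star Pi C.
Proof.
move=> hC PiC; split=> // p _; exists (fun _ => 1); do 2!split=> //; first exact: subpoly1.
exists C; split=> // G CG; exists 1, (fun _ => ord0); split=> // idx.
exact: hC CG (induced_emb_induced _).
Qed.

Theorem mainTheorem5 : decomposition_horizon weakly_sparse.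
Proof.
move=> C; split; last by move=> sparseC; exact: sub_star sparseC.1 sparseC.
case=> hC /(_ 2 isT) [f [f_mono [f_sub [D [[_ [t D_free]] decD]]]]].
have [s s_gt0 tf_le] := subpoly_mul_le t (isT : 0 < 2) f_sub.
split=> //; exists s => G CG /contains_Ktt_biclique [A [B [AB cardA cardB]]].
set U := A :|: B.
have [N [c [N_le decU]]] := decD _ (hC _ _ CG (induced_emb_induced U)).
have tN_le : t * N <= s.
  apply: leq_trans tf_le; apply/leq_mul/(leq_trans N_le (f_mono _ _ _)) => //.
  by rewrite order_induced (leq_trans (leq_card_setU A B).1) // cardA cardB mul2n addnn.
have cardAU : #|[set x : gV (induced U) | val x \in A]| = s.
  by rewrite card_preim_val ?subsetUl.
have cardBU : #|[set x : gV (induced U) | val x \in B]| = s.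
  by rewrite card_preim_val ?subsetUr.
have := biclique_two_colour_classes c (biclique_induced U AB).
rewrite cardAU cardBU => /(_ t s_gt0 s_gt0 tN_le tN_le) [idx Ktt].
exact: D_free _ (decU idx) Ktt.
Qed.
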